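(* Let $u_1,\dots,u_n$ be Boolean variables and $C_1,\dots,C_m$ clauses, each consisting of exactly 3 literals over these variables. Let $G$ be the graph with vertex set $\{x_i,u_i,v_i,\bar u_i,y_i:1\le i\le n\}\cup\{c_j:1\le j\le m\}\cup\{s_1,s_2,s_3,s_4,t\}$ and the following edges: for each $i$, $x_iu_i$, $u_iv_i$, $v_i\bar u_i$, $\bar u_iy_i$; for each $j$, an edge from $c_j$ to $u_i$ (resp. $\bar u_i$) whenever the literal $u_i$ (resp. $\bar u_i$) appears in $C_j$; for each $j$ and each $s\in\{s_1,s_3,s_4\}$, the edge $sc_j$; the edges $s_1s_2,s_3s_2,s_4s_2$; the edges $ts_1,ts_3,ts_4$; and the edges $tu_i$, $t\bar u_i$ for all $i$. Then $\tilde\gamma_c(G)\ge 3n+1$, and the collection $\{C_1,\dots,C_m\}$ is satisfiable if and only if $\tilde\gamma_c(G)=3n+1$.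
   Context: All graphs are finite and simple. A set $S\subseteq V$ is a dominating set of $G=(V,E)$ if every vertex not in $S$ is adjacent to a vertex of $S$. A set $\tilde D\subseteq V$ is an outer-connected dominating set of $G$ if $\tilde D$ is dominating and the induced subgraph $G[V\setminus\tilde D]$ is connected (the empty graph counts as connected). $\tilde\gamma_c(G)$ denotes the minimum size of an outer-connected dominating set of $G$. A collection of clauses is satisfiable if some truth assignment to the variables makes every clause contain a true literal. *)

From mathcomp Require Import all_boot.
Set Implicit Arguments. Unset Strict Implicit. Unset Printing Implicit Defensive.

(* A literal over variables u_0..u_{n-1}: (i, true) is u_i, (i, false) is \bar u_i. *)
Definition literal (n : nat) := ('I_n * bool)%type.

Definition lit_true n (a : 'I_n -> bool) (l : literal n) : bool := a l.1 == l.2.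

Definition satisfiable n m (cl : 'I_m -> 3.-tuple (literal n)) : Prop :=
  exists a : 'I_n -> bool, forall j : 'I_m, has (lit_true a) (cl j).

Definition dominating (T : finType) (e : rel T) (S : {set T}) : bool :=
  [forall v, (v \notin S) ==> [exists u in S, e v u]].

Definition induced_rel (T : finType) (e : rel T) (A : {set T}) : rel T :=
  [rel a b | [&& a \in A, b \in A & e a b]].

Definition outer_connected (T : finType) (e : rel T) (S : {set T}) : bool :=
  [forall x in ~: S, forall y in ~: S, connect (induced_rel e (~: S)) x y].

Definition outer_conn_dom (T : finType) (e : rel T) (S : {set T}) : bool :=
  dominating e S && outer_connected e S.

(* minimum size of an outer-connected dominating set (the full vertex set is one) *)
Definition gamma_oc (T : finType) (e : rel T) : nat :=
  \big[minn/#|T|]_(S : {set T} | outer_conn_dom e S) #|S|.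

(* Vertices of the reduction graph:
   inl (inl (i,k)) : k = 0,1,2,3,4 stands for x_i, u_i, v_i, \bar u_i, y_i;
   inl (inr j)     : c_j;
   inr s           : s = 0,1,2,3,4 stands for s_1, s_2, s_3, s_4, t. *)
Definition gvert (n m : nat) := ((('I_n * 'I_5) + 'I_m) + 'I_5)%type.

Definition in134 (s : 'I_5) : bool := (val s == 0) || (val s == 2) || (val s == 3).

(* one orientation of each edge *)
Definition gadj0 n m (cl : 'I_m -> 3.-tuple (literal n)) (a b : gvert n m) : bool :=
  match a, b with
  | inl (inl (i, k)), inl (inl (i', k')) => (i == i') && (val k' == (val k).+1)
  | inl (inr j), inl (inl (i, k)) =>
      ((val k == 1) && ((i, true) \in (cl j : seq _))) ||
      ((val k == 3) && ((i, false) \in (cl j : seq _)))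
  | inl (inr j), inr s => in134 s
  | inr s, inr s' => ((val s == 1) || (val s == 4)) && in134 s'
  | inr s, inl (inl (i, k)) => (val s == 4) && ((val k == 1) || (val k == 3))
  | _, _ => false
  end.

Definition gadj n m (cl : 'I_m -> 3.-tuple (literal n)) : rel (gvert n m) :=
  fun a b => gadj0 cl a b || gadj0 cl b a.

(* If at least two vertices lie outside an outer-connected dominating set S,
   every vertex outside S also has a neighbour outside S.  Hence the pendant
   vertices x_i and y_i lie in S, and dominating v_i and s_2 puts one of
   u_i, v_i, \bar u_i and one of s_1, ..., s_4 into S.  These 3n+1 forced
   vertices (a "core") bound |S| from below, while an S with at most one
   outside vertex is much larger.  A dominating core must contain s_2 (some s
   among s_1, s_3, s_4 lies outside it, and s can only be dominated by s_2, t
   or clause vertices), so every clause vertex c_j is dominated by a chosen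
   u_i or \bar u_i, and these choices satisfy every clause.  Conversely the
   core of a satisfying assignment (x_i, y_i, the true literal vertex of each
   variable, and s_2) is dominating, and every vertex outside it reaches t
   through at most one other outside vertex. *)

From mathcomp Require Import all_boot order zify.
Import Order.TTheory.
Set Implicit Arguments. Unset Strict Implicit. Unset Printing Implicit Defensive.

Section OuterConnectedDomination.
Variables (T : finType) (e : rel T).
Implicit Types S : {set T}.

Lemma dominatingP S :
  reflect (forall v, v \notin S -> exists2 u, u \in S & e v u) (dominating e S).
Proof.
apply: (iffP forallP) => [dom v vNS | dom v].
  by have /implyP/(_ vNS)/existsP[u /andP[uS evu]] := dom v; exists u.
by apply/implyP => /dom[u uS evu]; apply/existsP; exists u; rewrite uS.
Qed.

Lemma outer_connected_adj S w : outer_connected e S -> 1 < #|~: S| ->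
  w \notin S -> exists2 u, u \notin S & e w u.
Proof.
move=> oc twoNS wNS.
have [z zNS zNw] : exists2 z, z \in ~: S & z != w.
  have [x [y [xNS yNS xNy]]] := card_gt1P twoNS.
  by case: (eqVneq x w) => [xw|]; [exists y; rewrite // -xw eq_sym | exists x].
move/forallP/(_ w)/implyP: oc; rewrite in_setC wNS => /(_ isT)/forallP/(_ z)/implyP.
move=> /(_ zNS)/connectP[[|u p]] /=.
  by move=> _ zw; rewrite zw eqxx in zNw.
by case/andP => /and3P[_ uNS ewu] _ _; exists u; rewrite -?in_setC.
Qed.

Lemma outer_conn_dom_pendant S w u : outer_conn_dom e S -> 1 < #|~: S| ->
  (forall v, e w v -> v = u) -> w \in S.
Proof.
move=> /andP[dom oc] twoNS uniq_nbr; apply/negPn/negP => wNS.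
have [u1 u1S /uniq_nbr u1E] := dominatingP S dom w wNS.
have [u2 u2NS /uniq_nbr u2E] := outer_connected_adj oc twoNS wNS.
by rewrite u2E -u1E u1S in u2NS.
Qed.

Lemma dominating_closed_nbhd (I : Type) (f : I -> T) S k0 : dominating e S ->
  (forall v, e (f k0) v -> exists k, v = f k) -> exists k, f k \in S.
Proof.
move=> dom nbr; case: (boolP (f k0 \in S)) => [|/(dominatingP S dom)[v vS /nbr[k vE]]].
  by exists k0.
by exists k; rewrite -vE.
Qed.

Lemma outer_connected_star S z : symmetric e ->
  (forall w, w \notin S -> connect (induced_rel e (~: S)) w z) -> outer_connected e S.
Proof.
move=> esym to_z.
have rsym : connect_sym (induced_rel e (~: S)).
  by apply: sym_connect_sym => x y; rewrite /induced_rel /= esym andbCA.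
apply/forallP => x; apply/implyP; rewrite inE => xNS.
apply/forallP => y; apply/implyP; rewrite inE => yNS.
by rewrite (connect_trans (to_z x xNS)) // rsym to_z.
Qed.

Lemma outer_conn_domT : outer_conn_dom e setT.
Proof.
apply/andP; split; first by apply/forallP => v; rewrite inE.
by apply/forallP => x; rewrite setCT inE.
Qed.

Lemma gamma_oc_le S : outer_conn_dom e S -> gamma_oc e <= #|S|.
Proof. exact: (@bigmin_le_cond _ nat _ #|T|). Qed.

Lemma gamma_oc_attained : exists2 S, outer_conn_dom e S & gamma_oc e = #|S|.
Proof.
have [S ocdS gammaE] := @eq_bigmin _ nat {set T} #|T| _ _ (fun S : {set T} => #|S|)
  outer_conn_domT (fun S _ => max_card S).
by exists S.
Qed.

End OuterConnectedDomination.

Section Reduction.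
Variables (n m : nat) (cl : 'I_m -> 3.-tuple (literal n)).
Local Notation V := (gvert n m).
Local Notation adj := (gadj cl).

Definition xv i : V := inl (inl (i, @Ordinal 5 0 isT)).
Definition uv i : V := inl (inl (i, @Ordinal 5 1 isT)).
Definition vv i : V := inl (inl (i, @Ordinal 5 2 isT)).
Definition ubv i : V := inl (inl (i, @Ordinal 5 3 isT)).
Definition yv i : V := inl (inl (i, @Ordinal 5 4 isT)).
Definition cv j : V := inl (inr j).
(* Indexing s_1, ..., s_4 by 'I_4 lets a core pick one of them but never t. *)
Definition sv (k : 'I_4) : V := inr (widen_ord (isT : 4 <= 5) k).
Definition s1 := sv (@Ordinal 4 0 isT).
Definition s2 := sv (@Ordinal 4 1 isT).
Definition s3 := sv (@Ordinal 4 2 isT).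
Definition s4 := sv (@Ordinal 4 3 isT).
Definition tv : V := inr ord_max.

Definition litv (l : literal n) : V := if l.2 then uv l.1 else ubv l.1.

Variant vertex_spec : V -> Type :=
  | VertX i : vertex_spec (xv i)
  | VertU i : vertex_spec (uv i)
  | VertV i : vertex_spec (vv i)
  | VertUb i : vertex_spec (ubv i)
  | VertY i : vertex_spec (yv i)
  | VertC j : vertex_spec (cv j)
  | VertS1 : vertex_spec s1
  | VertS2 : vertex_spec s2
  | VertS3 : vertex_spec s3
  | VertS4 : vertex_spec s4
  | VertT : vertex_spec tv.

Lemma vertex_specE w w' : vertex_spec w' -> w = w' -> vertex_spec w.
Proof. by move=> + ->. Qed.

Lemma vertexP w : vertex_spec w.
Proof.
case: w => [[[i [[|[|[|[|[|k]]]]] lt]]|j]|[[|[|[|[|[|k]]]]] lt]] //;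
  [ apply: (vertex_specE (VertX i)) | apply: (vertex_specE (VertU i))
  | apply: (vertex_specE (VertV i)) | apply: (vertex_specE (VertUb i))
  | apply: (vertex_specE (VertY i)) | exact: VertC
  | apply: (vertex_specE VertS1) | apply: (vertex_specE VertS2)
  | apply: (vertex_specE VertS3) | apply: (vertex_specE VertS4)
  | apply: (vertex_specE VertT) ];
  first [do 2!congr inl; congr pair | congr inr]; exact: val_inj.
Qed.

Lemma card_gvert : #|{: V}| = n * 5 + m + 5.
Proof. by rewrite !card_sum card_prod !card_ord. Qed.

Lemma gadj_sym : symmetric adj.
Proof. by move=> v w; rewrite /gadj orbC. Qed.

Ltac adj_cases w :=
  case: w / vertexP => [?|?|?|?|?|?|||||]; rewrite /gadj /= ?andbF ?andbT ?orbF.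

Lemma adj_xv i w : adj (xv i) w -> w = uv i.
Proof. by adj_cases w => //= /eqP ->. Qed.

Lemma adj_yv i w : adj (yv i) w -> w = ubv i.
Proof. by adj_cases w => //= /eqP ->. Qed.

Lemma adj_vv i w : adj (vv i) w -> w = uv i \/ w = ubv i.
Proof. by adj_cases w => //= /eqP ->; [left | right]. Qed.

Lemma adj_s2 w : adj s2 w -> [\/ w = s1, w = s3 | w = s4].
Proof. by adj_cases w => //=; constructor. Qed.

Lemma adj_s134 s w : [\/ s = s1, s = s3 | s = s4] -> adj s w ->
  [\/ w = s2, w = tv | exists j, w = cv j].
Proof.
by case=> ->; adj_cases w => //= _; do ?[by constructor]; constructor 3; eexists.
Qed.

Lemma adj_cv j w : adj (cv j) w ->
  (exists2 l, l \in cl j & w = litv l) \/ [\/ w = s1, w = s3 | w = s4].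
Proof.
adj_cases w => //= l_in.
1,2: by left; eexists; first exact: l_in.
all: by right; constructor.
Qed.

Lemma adj_cv_litv j l : adj (cv j) (litv l) = (l \in cl j).
Proof. by case: l => i []; rewrite /gadj /= ?orbF. Qed.

Lemma adj_tv_litv l : adj tv (litv l).
Proof. by case: l => i []; rewrite /gadj /=. Qed.

Lemma adj_vv_litv i b : adj (vv i) (litv (i, b)).
Proof. by case: b; rewrite /gadj /= eqxx ?orbT. Qed.

Definition mid i (o : option bool) : V := if o is Some b then litv (i, b) else vv i.

Definition core_vertex (g : 'I_n -> option bool) (h : 'I_4)
    (x : ('I_n * bool + 'I_n) + unit) : V :=
  match x with
  | inl (inl (i, b)) => if b then xv i else yv i
  | inl (inr i) => mid i (g i)
  | inr _ => sv h
  end.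

Definition core g h : {set V} := core_vertex g h @: setT.

Lemma mid_inj i i' o o' : mid i o = mid i' o' -> i = i' /\ o = o'.
Proof.
by case: o o' => [[]|] [[]|]; rewrite /= /xv /yv /uv /ubv /vv //; case=> ->.
Qed.

Lemma core_vertex_inj g h : injective (core_vertex g h).
Proof.
move=> [[[i []]|i]|[]] [[[i' []]|i']|[]] //=; rewrite /mid /litv;
  do ?[case: (g _) => [[]|]]; rewrite /= /xv /yv /uv /ubv /vv //; by case=> ->.
Qed.

Lemma card_core g h : #|core g h| = 3 * n + 1.
Proof.
rewrite card_imset ?cardsT ?card_sum ?card_prod ?card_bool ?card_ord ?card_unit; first lia.
exact: core_vertex_inj.
Qed.

Section CoreMembership.
Variables (g : 'I_n -> option bool) (h : 'I_4).

Lemma core_xv i : xv i \in core g h.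
Proof. by apply/imsetP; exists (inl (inl (i, true))). Qed.

Lemma core_yv i : yv i \in core g h.
Proof. by apply/imsetP; exists (inl (inl (i, false))). Qed.

Lemma core_mid i o : (mid i o \in core g h) = (o == g i).
Proof.
apply/imsetP/eqP => [[[[[i' []]|i']|[]] _]|->]; last by exists (inl (inr i)).
- by case: o => [[]|].
- by case: o => [[]|].
- by move/mid_inj=> [-> ->].
- by case: o => [[]|].
Qed.

Lemma core_cv j : cv j \notin core g h.
Proof.
apply/imsetP => -[[[[i []]|i]|[]] _] //=; rewrite /mid /litv; by case: (g i) => [[]|].
Qed.

Lemma core_sv k : (sv k \in core g h) = (k == h).
Proof.
apply/imsetP/eqP => [[[[[i []]|i]|[]] _]|->] //=; last by exists (inr tt).
- by rewrite /mid /litv; case: (g i) => [[]|].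
- by case=> /val_inj.
Qed.

Lemma core_tv : tv \notin core g h.
Proof.
apply/imsetP => -[[[[i []]|i]|[]] _] //=; first by rewrite /mid /litv; case: (g i) => [[]|].
by case=> h4; have := ltn_ord h; rewrite -h4.
Qed.

End CoreMembership.

Lemma ocd_core_subset S : outer_conn_dom adj S -> 1 < #|~: S| ->
  exists g h, core g h \subset S.
Proof.
move=> ocdS twoNS; have /andP[domS _] := ocdS.
have mid_in i : exists o, mid i o \in S.
  apply: (dominating_closed_nbhd (f := mid i) (k0 := None) domS) => w /adj_vv[] ->.
    by exists (Some true).
  by exists (Some false).
have [g gS] := fin_all_exists mid_in.
have [h hS] : exists h, sv h \in S.
  by apply: (dominating_closed_nbhd (k0 := @Ordinal 4 1 isT) domS) => w /adj_s2[] ->; eexists.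
exists g, h; apply/subsetP => _ /imsetP[[[[i []]|i]|[]] _ ->] //=.
  by apply: (outer_conn_dom_pendant ocdS twoNS); apply: adj_xv.
by apply: (outer_conn_dom_pendant ocdS twoNS); apply: adj_yv.
Qed.

Lemma ocd_card_ge S : outer_conn_dom adj S -> 3 * n + 1 <= #|S|.
Proof.
move=> ocdS; have := cardsC S; rewrite card_gvert.
case: (leqP #|~: S| 1) => [|twoNS _]; first lia.
by have [g [h /subset_leq_card]] := ocd_core_subset ocdS twoNS; rewrite card_core.
Qed.

Lemma core_litv g h i b : (litv (i, b) \in core g h) = (Some b == g i).
Proof. exact: (core_mid g h i (Some b)). Qed.

Lemma dominating_core_s2 g h : dominating adj (core g h) -> s2 \in core g h.
Proof.
move/dominatingP=> dom.
have [s sN s134] : exists2 s, s \notin core g h & [\/ s = s1, s = s3 | s = s4].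
  case: (boolP (s1 \in core g h)) => [|s1N]; last by exists s1 => //; constructor.
  by rewrite core_sv => /eqP <-; exists s3; [rewrite core_sv | constructor].
have [w wC /(adj_s134 s134)[<- //|wt|[j wc]]] := dom s sN.
  by rewrite wt (negbTE (core_tv _ _)) in wC.
by rewrite wc (negbTE (core_cv _ _ _)) in wC.
Qed.

Lemma dominating_core_satisfiable g h : dominating adj (core g h) -> satisfiable cl.
Proof.
move=> domC; have := dominating_core_s2 domC; rewrite core_sv => /eqP hE.
exists (fun i => g i == Some true) => j.
have [w wC /adj_cv[[[i b] l_in wE]|s134]] := dominatingP _ _ domC (cv j) (core_cv g h j).
  apply/hasP; exists (i, b) => //; move: wC.
  by rewrite wE core_litv /lit_true /= => /eqP <-; case: b {l_in wE}.
by case: s134 wC => ->; rewrite core_sv -hE.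
Qed.

Lemma ocd_min_satisfiable S : outer_conn_dom adj S -> #|S| = 3 * n + 1 -> satisfiable cl.
Proof.
move=> ocdS cardS.
have twoNS : 1 < #|~: S| by have := cardsC S; rewrite card_gvert; lia.
have [g [h coreS]] := ocd_core_subset ocdS twoNS.
have coreE : core g h = S by apply/eqP; rewrite eqEcard coreS card_core cardS leqnn.
by have /andP[domS _] := ocdS; apply: (@dominating_core_satisfiable g h); rewrite coreE.
Qed.

Definition assignment_core (a : 'I_n -> bool) :=
  core (fun i => Some (a i)) (@Ordinal 4 1 isT).

Section AssignmentCore.
Variable a : 'I_n -> bool.
Local Notation C := (assignment_core a).

Lemma assignment_core_litv i b : (litv (i, b) \in C) = (b == a i).
Proof. exact: core_litv. Qed.

Lemma assignment_core_dominating : 0 < n -> (forall j, has (lit_true a) (cl j)) ->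
  dominating adj C.
Proof.
move=> n_gt0 a_sat; apply/dominatingP => w.
case: w / vertexP => [i|i|i|i|i|j|||||]; rewrite ?core_xv ?core_yv ?core_sv //.
- rewrite -[uv i]/(litv (i, true)) assignment_core_litv => /negbTE a_i.
  by exists (xv i); rewrite ?core_xv // /gadj /= eqxx orbT.
- by move=> _; exists (litv (i, a i)); rewrite ?assignment_core_litv ?adj_vv_litv.
- rewrite -[ubv i]/(litv (i, false)) assignment_core_litv eq_sym eqbF_neg negbK => a_i.
  by exists (yv i); rewrite ?core_yv // /gadj /= eqxx.
- move=> _; have /hasP[[i b] l_in /eqP a_i] := a_sat j.
  by exists (litv (i, b)); rewrite ?assignment_core_litv ?adj_cv_litv //= a_i.
- by exists s2; rewrite ?core_sv.
- by exists s2; rewrite ?core_sv.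
- by exists s2; rewrite ?core_sv.
- exists (litv (Ordinal n_gt0, a (Ordinal n_gt0))); last exact: adj_tv_litv.
  by rewrite assignment_core_litv.
Qed.

Lemma assignment_core_outer_connected : outer_connected adj C.
Proof.
have tN : tv \notin C by apply: core_tv.
have s2C : s2 \in C by rewrite core_sv.
apply: (@outer_connected_star _ _ _ tv gadj_sym) => w.
have step x y : x \notin C -> y \notin C -> adj x y -> connect (induced_rel adj (~: C)) x y.
  by move=> xN yN xy; apply: connect1; rewrite /induced_rel /= !inE xN yN.
have step_tv x : x \notin C -> adj x tv -> connect (induced_rel adj (~: C)) x tv.
  by move=> xN; apply: step xN tN.
case: w / vertexP => [i|i|i|i|i|j|||||]; rewrite ?core_xv ?core_yv ?s2C //;
  try by move=> wN; apply: step_tv wN _; rewrite /gadj /=.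
- move=> vN; have lN : litv (i, ~~ a i) \notin C.
    by rewrite assignment_core_litv; case: (a i).
  apply: connect_trans (step _ _ vN lN (adj_vv_litv _ _)) (step_tv _ lN _).
  by rewrite gadj_sym adj_tv_litv.
- move=> cN; have s1N : s1 \notin C by rewrite core_sv.
  by apply: connect_trans (step _ _ cN s1N _) (step_tv _ s1N _); rewrite /gadj /=.
Qed.

End AssignmentCore.

End Reduction.

Theorem claim5p3 (n m : nat) (cl : 'I_m -> 3.-tuple (literal n))
  (Hn : 0 < n) (Hcl : forall j : 'I_m, uniq (cl j)) :
  3 * n + 1 <= gamma_oc (gadj cl) /\
  (satisfiable cl <-> gamma_oc (gadj cl) = 3 * n + 1).
Proof.
have [S ocdS gammaE] := gamma_oc_attained (gadj cl).
have lower : 3 * n + 1 <= gamma_oc (gadj cl) by rewrite gammaE; exact: ocd_card_ge ocdS.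
split=> //; split=> [[a a_sat]|].
  apply/eqP; rewrite eqn_leq lower andbT.
  have ocd_core : outer_conn_dom (gadj cl) (assignment_core _ a).
    by rewrite /outer_conn_dom assignment_core_dominating ?assignment_core_outer_connected.
  by apply: leq_trans (gamma_oc_le ocd_core) _; rewrite card_core.
by rewrite gammaE; exact: ocd_min_satisfiable.
Qed.
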